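(* Let $t\in\mathbb{Q}^\times$ and $E_t:\ v^2=u^3+(t^2+2)u^2+u$. Then $E_t$ is isomorphic over $\mathbb{Q}$ to the elliptic curve $$E:\ y^2+xy+ay=x^3+ax^2,\qquad a=-\frac{1}{4t^2},$$ on which $[4](0,0)=\mathcal{O}$, and $E$ is $4$-isogenous (over $\mathbb{Q}$) to the elliptic curve $$E':\ Y^2+XY+AY=X^3+AX^2,\qquad A=\frac{t^2+4}{64},$$ via an isogeny $\phi:E\to E'$ of degree $4$ with $\phi(0,0)=\mathcal{O}$. *)

From HB Require Import structures.
From mathcomp Require Import all_boot all_order all_algebra.
Set Implicit Arguments. Unset Strict Implicit. Unset Printing Implicit Defensive.
Import Order.TTheory GRing.Theory Num.Theory.
Local Open Scope ring_scope.

(* A Weierstrass cubic y^2 + a1 x y + a3 y = x^3 + a2 x^2 + a4 x + a6 over Q. *)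
Record wcurve := WCurve { a1 : rat; a2 : rat; a3 : rat; a4 : rat; a6 : rat }.

Definition weq (E : wcurve) (x y : rat) : rat :=
  y ^+ 2 + a1 E * x * y + a3 E * y
  - (x ^+ 3 + a2 E * x ^+ 2 + a4 E * x + a6 E).

(* discriminant (Silverman III.1) *)
Definition disc (E : wcurve) : rat :=
  let b2 := a1 E ^+ 2 + 4 * a2 E in
  let b4 := 2 * a4 E + a1 E * a3 E in
  let b6 := a3 E ^+ 2 + 4 * a6 E in
  let b8 := a1 E ^+ 2 * a6 E + 4 * a2 E * a6 E - a1 E * a3 E * a4 E
            + a2 E * a3 E ^+ 2 - a4 E ^+ 2 in
  - b2 ^+ 2 * b8 - 8 * b4 ^+ 3 - 27 * b6 ^+ 2 + 9 * b2 * b4 * b6.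

Definition is_elliptic (E : wcurve) : Prop := disc E != 0.

Definition Q_isomorphic (E E' : wcurve) : Prop :=
  exists u r s w : rat, u != 0 /\
    forall x y : rat,
      weq E (u ^+ 2 * x + r) (u ^+ 3 * y + s * u ^+ 2 * x + w)
      = u ^+ 6 * weq E' x y.

(* Rational points: None is the point at infinity O. *)
Definition point := option (rat * rat).
Definition O_pt : point := None.

Definition on_curve (E : wcurve) (P : point) : bool :=
  if P is Some (x, y) then weq E x y == 0 else true.

(* chord-and-tangent group law (Silverman, Algorithm III.2.3) *)
Definition add_pt (E : wcurve) (P Q : point) : point :=
  match P, Q with
  | None, _ => Q
  | _, None => P
  | Some (x1, y1), Some (x2, y2) =>
      if (x1 == x2) && (y1 + y2 + a1 E * x2 + a3 E == 0) then None
      else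
        let lam := if x1 != x2 then (y2 - y1) / (x2 - x1)
                   else (3 * x1 ^+ 2 + 2 * a2 E * x1 + a4 E - a1 E * y1)
                        / (2 * y1 + a1 E * x1 + a3 E) in
        let nu := if x1 != x2 then (y1 * x2 - y2 * x1) / (x2 - x1)
                  else (- x1 ^+ 3 + a4 E * x1 + 2 * a6 E - a3 E * y1)
                       / (2 * y1 + a1 E * x1 + a3 E) in
        let x3 := lam ^+ 2 + a1 E * lam - a2 E - x1 - x2 in
        Some (x3, - (lam + a1 E) * x3 - nu - a3 E)
  end.

Fixpoint mul_pt (E : wcurve) (n : nat) (P : point) : point :=
  if n is n'.+1 then add_pt E P (mul_pt E n' P) else O_pt.

(* Bivariate polynomials in Q[x][y]:  {poly {poly rat}}, outer variable y. *)
Definition Xb : {poly {poly rat}} := ('X)%:P.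
Definition Yb : {poly {poly rat}} := 'X.

Definition weq_poly (E : wcurve) : {poly {poly rat}} :=
  Yb ^+ 2 + (a1 E)%:P%:P * Xb * Yb + (a3 E)%:P%:P * Yb
  - (Xb ^+ 3 + (a2 E)%:P%:P * Xb ^+ 2 + (a4 E)%:P%:P * Xb + (a6 E)%:P%:P).

(* A rational map phi : E --> E' defined over Q, given in the normal form
     phi(x, y) = ( N(x)/D(x) , (P(x) + Q(x) y)/R(x) )
   (every isogeny has this form: x'∘phi is invariant under negation, hence
   lies in Q(x), and Q(E) = Q(x) ⊕ Q(x) y).  The condition that phi maps E to
   E' is that the cleared-denominator equation of E' pulled back by phi
   vanishes on E, i.e. is divisible by the Weierstrass polynomial of E. *)
Record ratmap := RatMap { mN : {poly rat}; mD : {poly rat};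
                          mP : {poly rat}; mQ : {poly rat}; mR : {poly rat} }.

Definition pullback_eq (E' : wcurve) (f : ratmap) : {poly {poly rat}} :=
  let N := (mN f)%:P in let D := (mD f)%:P in let R := (mR f)%:P in
  let Yn := (mP f)%:P + (mQ f)%:P * Yb in
  Yn ^+ 2 * D ^+ 3 + (a1 E')%:P%:P * N * Yn * R * D ^+ 2
  + (a3 E')%:P%:P * Yn * R * D ^+ 3
  - (N ^+ 3 * R ^+ 2 + (a2 E')%:P%:P * N ^+ 2 * D * R ^+ 2
     + (a4 E')%:P%:P * N * D ^+ 2 * R ^+ 2 + (a6 E')%:P%:P * D ^+ 3 * R ^+ 2).

Definition maps_into (E E' : wcurve) (f : ratmap) : Prop :=
  [/\ mD f != 0, mR f != 0 &
      exists H : {poly {poly rat}}, pullback_eq E' f = H * weq_poly E].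

(* phi(O) = O  iff  x'∘phi = N(x)/D(x) has a pole at O, i.e. deg N > deg D
   (N, D coprime). *)
Definition fixes_O (f : ratmap) : Prop := (size (mD f) < size (mN f))%N.

(* Degree of phi: [Q(E) : phi^* Q(E')] = [Q(x) : Q(N/D)] since both
   [Q(E):Q(x)] and [Q(E'):Q(x')] equal 2; and [Q(x):Q(N/D)] = max(deg N, deg D)
   for coprime N, D. *)
Definition map_degree (f : ratmap) : nat :=
  (maxn (size (mN f)) (size (mD f))).-1.

(* An isogeny E -> E' over Q of degree n: a non-constant rational map defined
   over Q sending O to O (it is then automatically a morphism and a group
   homomorphism). *)
Definition Q_isogeny (E E' : wcurve) (f : ratmap) (n : nat) : Prop :=
  [/\ coprimep (mN f) (mD f), maps_into E E' f, fixes_O f & map_degree f = n].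

(* phi(x0, y0) = O  iff  x'∘phi has a pole at (x0,y0), i.e. D(x0) = 0. *)
Definition maps_to_O (f : ratmap) (x0 y0 : rat) : Prop := (mD f).[x0] = 0.

Definition Et (t : rat) : wcurve := WCurve 0 (t ^+ 2 + 2) 0 1 0.
Definition E_of (t : rat) : wcurve :=
  let a := - (4 * t ^+ 2)^-1 in WCurve 1 a a 0 0.
Definition E'_of (t : rat) : wcurve :=
  let A := (t ^+ 2 + 4) / 64 in WCurve 1 A A 0 0.

From HB Require Import structures.
From mathcomp Require Import all_boot all_order all_algebra.
From mathcomp Require Import ring lra.
Import Order.TTheory GRing.Theory Num.Theory.
Local Open Scope ring_scope.

(* The change of variables x = 4t^2 x' - 1 moves the point (-1, -t) of E_t to
   the origin of E, which is in Tate normal form y^2 + xy + ay = x^3 + ax^2;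
   there [2](0,0) = (-a, 0) and [3](0,0) = (0, -a) = -(0,0).  The isogeny is
   Velu's map with kernel <(0,0)> followed by a change of coordinates onto E'.
   As weq_poly E is monic of degree 2 in y, the pulled-back equation of E' is
   a multiple of it as soon as both coefficients of its remainder in y vanish;
   these are polynomials in x, and they vanish at every rational point. *)

Lemma poly_eq0_horner (R : numDomainType) (p : {poly R}) :
  (forall x, p.[x] = 0) -> p = 0.
Proof.
move=> p0; apply: (@roots_geq_poly_eq0 _ p [seq i%:R | i <- iota 0 (size p)]).
- by apply/allP => x _; rewrite /root p0.
- by rewrite map_inj_uniq ?iota_uniq // => m n /eqP; rewrite eqr_nat => /eqP.
- by rewrite size_map size_iota.
Qed.

Section PullbackModWeierstrass.

Variables (E E' : wcurve) (f : ratmap).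

Let N := mN f.
Let D := mD f.
Let P := mP f.
Let Q := mQ f.
Let R := mR f.
Let L := a1 E' *: (N * R * D ^+ 2) + a3 E' *: (R * D ^+ 3).
Let K := R ^+ 2 * (N ^+ 3 + a2 E' *: (N ^+ 2 * D) + a4 E' *: (N * D ^+ 2)
                   + a6 E' *: D ^+ 3).

(* For D != 0, this vanishes iff f commutes with the negations
   (x, y) |-> (x, - y - a1 x - a3) of E and E'. *)
Definition pullback_rem_y : {poly rat} :=
  2 * D * P + R * (a1 E' *: N + a3 E' *: D) - D * Q * (a1 E *: 'X + (a3 E)%:P).

Definition pullback_rem_1 : {poly rat} :=
  D ^+ 3 * P ^+ 2 + L * P - K
  + D ^+ 3 * Q ^+ 2 * ('X ^+ 3 + a2 E *: 'X ^+ 2 + a4 E *: 'X + (a6 E)%:P).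

Lemma pullback_eq_modw :
  pullback_eq E' f = (Q ^+ 2 * D ^+ 3)%:P * weq_poly E
    + (D ^+ 2 * Q * pullback_rem_y)%:P * Yb + pullback_rem_1%:P.
Proof.
rewrite /pullback_eq /weq_poly /pullback_rem_y /pullback_rem_1 /L /K /Xb.
by rewrite -!mul_polyC; ring.
Qed.

Lemma maps_into_rem0 :
  D != 0 -> R != 0 -> pullback_rem_y = 0 -> pullback_rem_1 = 0 ->
  maps_into E E' f.
Proof.
move=> D0 R0 remy0 rem10; split=> //; exists (Q ^+ 2 * D ^+ 3)%:P.
by rewrite pullback_eq_modw remy0 rem10 mulr0 !rmorph0 mul0r !addr0.
Qed.

End PullbackModWeierstrass.

Definition tate4 (a : rat) : wcurve := WCurve 1 a a 0 0.

Lemma disc_tate4 (a : rat) : disc (tate4 a) = a ^+ 4 * (1 - 16 * a).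
Proof. by rewrite /disc /=; ring. Qed.

Lemma tate4_elliptic (a : rat) :
  a != 0 -> 1 - 16 * a != 0 -> is_elliptic (tate4 a).
Proof.
by move=> a0 a16; rewrite /is_elliptic disc_tate4 (mulf_neq0 (expf_neq0 _ a0) a16).
Qed.

Lemma tate4_on_curve (a : rat) : on_curve (tate4 a) (Some (0, 0)).
Proof. by rewrite /on_curve /weq /=; apply/eqP; ring. Qed.

Lemma tate4_order4 (a : rat) : a != 0 ->
  mul_pt (tate4 a) 4 (Some (0, 0)) = O_pt.
Proof.
move=> a0; set E := tate4 a; set P0 : point := Some (0, 0).
have P2 : add_pt E P0 P0 = Some (- a, 0).
  rewrite /add_pt /= (_ : 0 + 0 + 1 * 0 + a = a); last by ring.
  rewrite (negbTE a0) /=.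
  by congr (Some (_, _)); field.
have P3 : add_pt E P0 (Some (- a, 0)) = Some (0, - a).
  have a0' : (0 == - a) = false by rewrite eq_sym oppr_eq0; exact: negbTE.
  rewrite /add_pt /= a0' /=.
  by congr (Some (_, _)); field.
have P4 : add_pt E P0 (Some (0, - a)) = None.
  by rewrite /add_pt /= (_ : 0 - a + 1 * 0 + a = 0) ?eqxx //; ring.
by change (add_pt E P0 (add_pt E P0 (add_pt E P0 P0)) = O_pt); rewrite P2 P3 P4.
Qed.

Lemma disc_Et (t : rat) : disc (Et t) = 16 * t ^+ 2 * (t ^+ 2 + 4).
Proof. by rewrite /disc /=; ring. Qed.

Lemma sqr_add4_neq0 (t : rat) : t ^+ 2 + 4 != 0.
Proof. by apply: lt0r_neq0; have := sqr_ge0 t; lra. Qed.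

Lemma curves_elliptic (t : rat) : t != 0 ->
  [/\ is_elliptic (Et t), is_elliptic (E_of t) & is_elliptic (E'_of t)].
Proof.
move=> t0; have t4 := sqr_add4_neq0 t; split.
- by rewrite /is_elliptic disc_Et !mulf_neq0 ?expf_neq0.
- apply: tate4_elliptic; first by rewrite oppr_eq0 invr_neq0 ?mulf_neq0 ?expf_neq0.
  rewrite (_ : 1 - _ = (t ^+ 2 + 4) / t ^+ 2); last by field.
  by rewrite mulf_neq0 ?invr_neq0 ?expf_neq0.
- apply: tate4_elliptic; first by rewrite mulf_neq0.
  rewrite (_ : 1 - _ = - (t ^+ 2 / 4)); last by field.
  by rewrite oppr_eq0 mulf_neq0 ?expf_neq0.
Qed.

Lemma Et_isomorphic (t : rat) : t != 0 -> Q_isomorphic (Et t) (E_of t).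
Proof.
move=> t0; exists (2 * t), (-1), t, (- t); split; first by rewrite mulf_neq0.
by move=> x y; rewrite /weq /=; field.
Qed.

(* velu_D vanishes at the x-coordinates of the kernel: 0 for (0, 0) and
   [3](0, 0), and 1/(4t^2) for [2](0, 0). *)
Definition velu_N (t : rat) : {poly rat} :=
  Poly [:: -1; 2 ^+ 3 * t ^+ 2; 2 ^+ 5 * t ^+ 2 - 2 ^+ 4 * t ^+ 4;
           - (2 ^+ 7 * t ^+ 4); 2 ^+ 6 * t ^+ 6].
Definition velu_D (t : rat) : {poly rat} :=
  (2 ^+ 10 * t ^+ 4) *: ('X ^+ 2 * ('X - ((4 * t ^+ 2)^-1)%:P)).
Definition velu_P (t : rat) : {poly rat} :=
  Poly [:: 1; - (2 ^+ 3 * t) - 7 * 2 * t ^+ 2;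
           3 * 2 ^+ 5 * t ^+ 3 + 9 * 2 ^+ 3 * t ^+ 4;
           2 ^+ 7 * t ^+ 3 - 13 * 2 ^+ 5 * t ^+ 5 - 5 * 2 ^+ 5 * t ^+ 6;
           - (2 ^+ 10 * t ^+ 5) + 2 ^+ 6 * t ^+ 6 + 3 * 2 ^+ 8 * t ^+ 7
             + 2 ^+ 7 * t ^+ 8;
           5 * 2 ^+ 9 * t ^+ 7 - 3 * 2 ^+ 7 * t ^+ 8 - 2 ^+ 9 * t ^+ 9;
           - (2 ^+ 11 * t ^+ 9) + 2 ^+ 9 * t ^+ 10].
Definition velu_Q (t : rat) : {poly rat} :=
  Poly [:: - (2 ^+ 3 * t ^+ 2); 5 * 2 ^+ 4 * t ^+ 4; - (2 ^+ 8 * t ^+ 6);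
           2 ^+ 8 * t ^+ 8; - (2 ^+ 9 * t ^+ 8); 2 ^+ 10 * t ^+ 10].
Definition velu_R (t : rat) : {poly rat} :=
  (2 ^+ 16 * t ^+ 7) *: ('X ^+ 3 * ('X - ((4 * t ^+ 2)^-1)%:P) ^+ 2).

Definition phi4 (t : rat) : ratmap :=
  RatMap (velu_N t) (velu_D t) (velu_P t) (velu_Q t) (velu_R t).

Section Phi4.

Variable t : rat.
Hypothesis t0 : t != 0.

Let c_neq0 (n k : nat) : 2 ^+ n * t ^+ k != 0.
Proof. by rewrite mulf_neq0 ?expf_neq0 ?pnatr_eq0. Qed.

Lemma size_velu_N : size (velu_N t) = 5.
Proof. by rewrite /velu_N (PolyK (c := 0)) //; cbn [last]; rewrite c_neq0. Qed.

Lemma size_velu_D : size (velu_D t) = 4.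
Proof.
rewrite /velu_D size_scale ?c_neq0 // size_Mmonic ?monicXsubC //.
  by rewrite size_polyXn size_XsubC.
by rewrite -size_poly_eq0 size_polyXn.
Qed.

Lemma velu_R_neq0 : velu_R t != 0.
Proof.
rewrite /velu_R scaler_eq0 negb_or c_neq0.
by rewrite mulf_neq0 ?expf_neq0 ?polyX_eq0 ?polyXsubC_eq0.
Qed.

Lemma coprimep_velu : coprimep (velu_N t) (velu_D t).
Proof.
rewrite /velu_D coprimepZr ?c_neq0 // coprimepMr coprimep_pexpr //.
rewrite coprimepX coprimep_XsubC /root.
have -> : (velu_N t).[0] = -1 by rewrite horner_Poly /=; ring.
have -> : (velu_N t).[(4 * t ^+ 2)^-1] = (4 * t ^+ 2)^-1.
  by rewrite horner_Poly /=; field.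
by rewrite oppr_eq0 oner_eq0 invr_eq0 mulf_neq0 ?expf_neq0.
Qed.

Let horner_phi4 := (hornerD, hornerN, hornerM, hornerX, hornerC, horner_exp,
                    hornerZ, hornerMn, horner_Poly).

Lemma phi4_rem_y : pullback_rem_y (E_of t) (E'_of t) (phi4 t) = 0.
Proof.
apply: poly_eq0_horner => x.
by rewrite /pullback_rem_y /= !horner_phi4 /=; field.
Qed.

Lemma phi4_rem_1 : pullback_rem_1 (E_of t) (E'_of t) (phi4 t) = 0.
Proof.
apply: poly_eq0_horner => x.
by rewrite /pullback_rem_1 /= !horner_phi4 /=; field.
Qed.

Lemma phi4_isogeny : Q_isogeny (E_of t) (E'_of t) (phi4 t) 4.
Proof.
have D0 : velu_D t != 0 by rewrite -size_poly_eq0 size_velu_D.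
split; rewrite /fixes_O /map_degree /= ?size_velu_N ?size_velu_D //.
- exact: coprimep_velu.
- by apply: maps_into_rem0; [exact: D0 | exact: velu_R_neq0 | exact: phi4_rem_y
    | exact: phi4_rem_1].
Qed.

Lemma phi4_kernel : maps_to_O (phi4 t) 0 0.
Proof.
by rewrite /maps_to_O /velu_D hornerZ hornerM horner_exp hornerX expr2 !mul0r mulr0.
Qed.

End Phi4.

Theorem proposition2p1 (t : rat) (ht : t != 0) :
  (is_elliptic (Et t) /\ is_elliptic (E_of t) /\ is_elliptic (E'_of t)) /\
  Q_isomorphic (Et t) (E_of t) /\
  (on_curve (E_of t) (Some (0, 0)) /\ mul_pt (E_of t) 4 (Some (0, 0)) = O_pt) /\
  (exists phi : ratmap,
      Q_isogeny (E_of t) (E'_of t) phi 4 /\ maps_to_O phi 0 0).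
Proof.
have [ellEt ellE ellE'] := curves_elliptic t ht.
split; first by do !split.
split; first exact: Et_isomorphic.
split.
  split; first exact: tate4_on_curve.
  by apply: tate4_order4; rewrite oppr_eq0 invr_neq0 ?mulf_neq0 ?expf_neq0.
by exists (phi4 t); split; [exact: phi4_isogeny | exact: phi4_kernel].
Qed.
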